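(* Assume $0<\beta\le\alpha<\sqrt n$ and $e\in\mathbb{R}^n$ satisfies $\|e\|=\sqrt n$. Let $\bar x$ be any point of $\partial K_e(\alpha)$ other than the origin. Assume $v\ne0$ lies in the tangent space to $\partial K_e(\alpha)$ at $\bar x$, and also lies in the tangent space to $\partial K_e(\beta)$ at some point other than the origin. Then the angle $\theta$ between $\bar x$ and $v$ satisfies $|\cos\theta|\le\beta/\alpha$.
   Context: $\mathbb{R}^n$ carries the dot product and Euclidean norm. For $0<\gamma<\sqrt n$, $K_e(\gamma)=\{x:e^Tx\ge\gamma\|x\|\}$, and $\partial$ denotes boundary. For $0\ne z\in\partial K_e(\gamma)$, the tangent space to $\partial K_e(\gamma)$ at $z$ is $\{u:(e^Tz)(e^Tu)-\gamma^2z^Tu=0\}$ (the tangent space of the quadric $(e^Tx)^2-\gamma^2\|x\|^2=0$ at $z$). *)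

From HB Require Import structures.
From mathcomp Require Import all_boot all_order all_algebra.
From mathcomp Require Import all_classical all_reals all_analysis.
Set Implicit Arguments. Unset Strict Implicit. Unset Printing Implicit Defensive.
Import Order.TTheory GRing.Theory Num.Theory.
Import numFieldNormedType.Exports.
Local Open Scope classical_set_scope.
Local Open Scope ring_scope.

Definition dotp (R : realType) (n : nat) (u v : 'rV[R]_n) : R :=
  \sum_(i < n) u ord0 i * v ord0 i.

Definition enorm (R : realType) (n : nat) (u : 'rV[R]_n) : R :=
  Num.sqrt (dotp u u).

Definition Kcone (R : realType) (n : nat) (e : 'rV[R]_n) (g : R) : set 'rV[R]_n :=
  [set x | g * enorm x <= dotp e x].

Definition bdry (R : realType) (n : nat) (A : set 'rV[R]_n) : set 'rV[R]_n :=
  closure A `\` interior A.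

Definition tangent_space (R : realType) (n : nat) (e : 'rV[R]_n) (g : R)
    (z : 'rV[R]_n) : set 'rV[R]_n :=
  [set u | dotp e z * dotp e u - g ^+ 2 * dotp z u = 0].

From HB Require Import structures.
From mathcomp Require Import all_boot all_order all_algebra.
From mathcomp Require Import all_classical all_reals all_analysis.
From mathcomp Require Import ring.
Import Order.TTheory GRing.Theory Num.Theory.
Import numFieldNormedType.Exports.
Local Open Scope classical_set_scope.
Local Open Scope ring_scope.

(* On the boundary of K_e(g) one has e.x = g |x|, so the tangent condition at
   such a point z reads |z| (e.v) = g (z.v).  At the point of the beta-cone this
   and Cauchy-Schwarz give |e.v| <= beta |v|; at xbar it gives
   alpha |xbar.v| = |xbar| |e.v| <= beta |xbar| |v|. *)

Lemma continuous_sum (T : topologicalType) (R : realType) (I : Type)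
    (r : seq I) (F : I -> T -> R) :
  (forall i, continuous (F i)) -> continuous (fun x => \sum_(i <- r) F i x).
Proof.
move=> Fc x; elim: r => [|i r IHr].
  under eq_fun do rewrite big_nil.
  exact: cst_continuous.
under eq_fun do rewrite big_cons.
exact: (continuousD (Fc i x) IHr).
Qed.

Lemma bdry_le_eq (T : topologicalType) (R : realType) (f h : T -> R) (x : T) :
  continuous f -> continuous h ->
  closure [set y | f y <= h y] x -> ~ interior [set y | f y <= h y] x ->
  f x = h x.
Proof.
move=> fc hc cl nint.
have dc : continuous (fun y => h y - f y) by move=> y; exact: (continuousB (hc y) (fc y)).
have [fh|hf|//] := ltgtP (f x) (h x).
- exfalso; apply: nint.
  have nb : nbhs (h x - f x) [set r : R | 0 < r].
    by apply: open_nbhs_nbhs; split; [exact: open_gt | rewrite /= subr_gt0].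
  have : nbhs x ((fun y => h y - f y) @^-1` [set r | 0 < r]) := dc x _ nb.
  rewrite /interior /=; apply: filterS => y /=.
  by rewrite subr_gt0 => /ltW.
- have nb : nbhs (h x - f x) [set r : R | r < 0].
    by apply: open_nbhs_nbhs; split; [exact: open_lt | rewrite /= subr_lt0].
  have [y [/= fhy]] := cl _ (dc x _ nb).
  by rewrite subr_lt0 => /(le_lt_trans fhy); rewrite ltxx.
Qed.

Section Dotp.
Context {R : realType} {n : nat}.
Implicit Types (e u v x z : 'rV[R]_n).

Lemma dotpC u v : dotp u v = dotp v u.
Proof. by apply: eq_bigr => i _; rewrite mulrC. Qed.

Lemma dotp0l v : dotp 0 v = 0.
Proof. by rewrite /dotp big1 // => i _; rewrite mxE mul0r. Qed.

Lemma dotp_ge0 u : 0 <= dotp u u.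
Proof. by apply: sumr_ge0 => i _; rewrite -expr2 sqr_ge0. Qed.

Lemma dotp_eq0 u : (dotp u u == 0) = (u == 0).
Proof.
apply/idP/eqP => [|->]; last by rewrite dotp0l.
rewrite psumr_eq0 => [/allP u0|i _]; last by rewrite -expr2 sqr_ge0.
apply/rowP => j; rewrite mxE.
by have /implyP/(_ isT) := u0 j (mem_index_enum j); rewrite mulf_eq0 orbb => /eqP.
Qed.

Lemma dotp_quad u v (a b : R) :
  dotp (a *: u + b *: v) (a *: u + b *: v) =
  a ^+ 2 * dotp u u + 2 * a * b * dotp u v + b ^+ 2 * dotp v v.
Proof.
rewrite /dotp !mulr_sumr -!big_split /=; apply: eq_bigr => i _.
by rewrite !mxE; ring.
Qed.

Lemma enorm_sqr u : enorm u ^+ 2 = dotp u u.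
Proof. by rewrite /enorm sqr_sqrtr // dotp_ge0. Qed.

Lemma enorm_ge0 u : 0 <= enorm u.
Proof. exact: sqrtr_ge0. Qed.

Lemma enorm_gt0 u : u != 0 -> 0 < enorm u.
Proof. by move=> u0; rewrite /enorm sqrtr_gt0 lt0r dotp_eq0 u0 dotp_ge0. Qed.

Lemma cauchy_schwarz u v : `|dotp u v| <= enorm u * enorm v.
Proof.
have [->|v0] := eqVneq v 0; first by rewrite dotpC dotp0l normr0 mulr_ge0 ?enorm_ge0.
set d := dotp u v; set a := enorm u; set b := enorm v.
(* |b^2 u - d v|^2 = b^2 (a^2 b^2 - d^2) *)
have := dotp_ge0 (b ^+ 2 *: u + (- d) *: v).
rewrite dotp_quad -!enorm_sqr -/a -/b -/d => q.
have b2 : 0 < b ^+ 2 by rewrite exprn_gt0 // enorm_gt0.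
have d2 : d ^+ 2 <= (a * b) ^+ 2.
  rewrite -(ler_pM2l b2) -subr_ge0.
  rewrite (_ : _ - _ = (b ^+ 2) ^+ 2 * a ^+ 2 + 2 * b ^+ 2 * - d * d + (- d) ^+ 2 * b ^+ 2) //.
  by ring.
by rewrite -ler_sqr ?nnegrE ?mulr_ge0 ?enorm_ge0 // real_normK ?num_real.
Qed.

Lemma dotp_continuous u : continuous (dotp u).
Proof.
apply: continuous_sum => i x.
by apply: continuousM; [exact: cst_continuous | exact: coord_continuous].
Qed.

Lemma enorm_continuous : continuous (fun u : 'rV[R]_n => enorm u).
Proof.
move=> x; apply: (continuous_comp (f := fun y : 'rV[R]_n => dotp y y)).
  by apply: continuous_sum => i y; apply: continuousM; exact: coord_continuous.
exact: sqrt_continuous.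
Qed.

Lemma bdry_Kcone e (g : R) x : bdry (Kcone e g) x -> dotp e x = g * enorm x.
Proof.
move=> [cl nint]; symmetry; apply: bdry_le_eq cl nint => //.
- by move=> y; apply: continuousM; [exact: cst_continuous | exact: enorm_continuous].
- exact: dotp_continuous.
Qed.

Lemma tangent_space_bdry {e} {g : R} {z v} : 0 < g ->
  bdry (Kcone e g) z -> tangent_space e g z v ->
  enorm z * dotp e v = g * dotp z v.
Proof.
move=> g0 /bdry_Kcone ez; rewrite /tangent_space /= ez => t.
apply: (mulfI (lt0r_neq0 g0)); apply/eqP; rewrite -subr_eq0 -t.
by apply/eqP; ring.
Qed.

Lemma tangent_space_bdry_le {e} {g : R} {z v} : 0 < g -> z != 0 ->
  bdry (Kcone e g) z -> tangent_space e g z v ->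
  `|dotp e v| <= g * enorm v.
Proof.
move=> g0 z0 bz /(tangent_space_bdry g0 bz) t.
have z_gt0 := enorm_gt0 _ z0.
rewrite -(ler_pM2l z_gt0) -(ger0_norm (ltW z_gt0)) -normrM t normrM.
rewrite (gtr0_norm g0) (ger0_norm (ltW z_gt0)) mulrCA ler_wpM2l ?(ltW g0) //.
exact: cauchy_schwarz.
Qed.

End Dotp.

(* The bounds alpha < sqrt n and |e| = sqrt n only make the cones proper; the
   estimate does not use them. *)
Theorem lemma5p2 (R : realType) (n : nat) (alpha beta : R) (e xbar v : 'rV[R]_n) :
  0 < beta -> beta <= alpha -> alpha < Num.sqrt n%:R ->
  enorm e = Num.sqrt n%:R ->
  bdry (Kcone e alpha) xbar -> xbar != 0 ->
  v != 0 ->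
  tangent_space e alpha xbar v ->
  (exists z : 'rV[R]_n, [/\ bdry (Kcone e beta) z, z != 0 & tangent_space e beta z v]) ->
  `| dotp xbar v / (enorm xbar * enorm v) | <= beta / alpha.
Proof.
move=> beta0 le_beta_alpha _ _ bx x0 v0 tx [z [bz z0 tz]].
have alpha0 : 0 < alpha by apply: lt_le_trans le_beta_alpha.
have xv := tangent_space_bdry alpha0 bx tx.
have ev := tangent_space_bdry_le beta0 z0 bz tz.
have x_gt0 := enorm_gt0 _ x0; have v_gt0 := enorm_gt0 _ v0.
have bound : alpha * `|dotp xbar v| <= beta * (enorm xbar * enorm v).
  rewrite -(gtr0_norm alpha0) -normrM -xv normrM (gtr0_norm x_gt0).
  by rewrite mulrCA ler_wpM2l // ltW.
rewrite normrM normfV (gtr0_norm (mulr_gt0 x_gt0 v_gt0)) ler_pdivrMr ?mulr_gt0 //.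
by rewrite mulrAC ler_pdivlMr // mulrC.
Qed.
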